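(* Let $s$ be a non-null loop sequence in $\mathbb{Z}^d$ and let $s'$ be obtained from $s$ by a splitting operation. Then $\iota(s')<\iota(s)$.
   Context: $E$ is the set of directed nearest-neighbour edges of $\mathbb{Z}^d$; $e^{-1}$ is the reversed edge. Paths, closed paths and cycles (classes of closed paths under cyclic rotation) as usual; each cycle has a first edge fixed by an arbitrary rule and ''location $k$'' is its $k$-th edge. A closed path $e_1\cdots e_n$ has a backtrack at $i\le n-1$ if $e_{i+1}=e_i^{-1}$ and at $n$ if $e_1=e_n^{-1}$; successively erasing backtracks (removing both edges) until none remain gives a well-defined cycle $[\cdot]$. A loop is a cycle without backtracks (including the null loop). A loop sequence is a finite sequence of loops modulo inserting/deleting null loops; a non-null one has a minimal representation $(l_1,\dots,l_n)$ without null loops; its length is $|s|=\sum|l_i|$, its size is $\#s=n$, and its index is $\iota(s)=|s|-\#s$ (all zero for the null loop sequence). Splitting a loop $l$ at distinct locations $x,y$: if $l$ has edge $e$ at both, write $l=aebec$ (displayed $e$'s at $x,y$ respectively) and obtain the pair $([aec],[be])$; if $l$ has $e$ at $x$ and $e^{-1}$ at $y$, write $l=aebe^{-1}c$ and obtain $([ac],[b])$. A splitting of $s$ replaces one component $l_k$ of its minimal representation by the two loops of a splitting of $l_k$. *)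

From mathcomp Require Import all_boot all_order all_algebra.
Set Implicit Arguments. Unset Strict Implicit. Unset Printing Implicit Defensive.
Import Order.TTheory GRing.Theory Num.Theory.

(* Vertices of Z^d and directed nearest-neighbour edges.
   An edge (v, i, b) goes from v to v + e_i (b = true) or v - e_i (b = false). *)
Definition vertex (d : nat) := {ffun 'I_d -> int}.
Definition edge (d : nat) := (vertex d * 'I_d * bool)%type.

Definition esrc d (e : edge d) : vertex d := e.1.1.
Definition etgt d (e : edge d) : vertex d :=
  [ffun j => (e.1.1 j + (if j == e.1.2 then (if e.2 then 1 else -1) else 0))%R].
Definition erev d (e : edge d) : edge d := (etgt e, e.1.2, ~~ e.2).

(* Cycles are
   represented by closed paths; two represent the same cycle iff they are
   cyclic rotations of each other. *)
Definition closed_path d (p : seq (edge d)) : bool :=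
  cycle (fun e f => etgt e == esrc f) p.

Definition no_backtrack d (p : seq (edge d)) : bool :=
  cycle (fun e f => f != erev e) p.

Definition is_loop d (p : seq (edge d)) : bool := closed_path p && no_backtrack p.

Definition cycle_eq d (p q : seq (edge d)) : Prop := exists r, q = rot r p.

Inductive bt_step d : seq (edge d) -> seq (edge d) -> Prop :=
| bt_inner (p1 p2 : seq (edge d)) (e : edge d) :
    bt_step (p1 ++ e :: erev e :: p2) (p1 ++ p2)
| bt_wrap (p1 : seq (edge d)) (e : edge d) :
    bt_step (erev e :: rcons p1 e) p1.

(* reduces p q : q is obtained from p by successively erasing backtracks
   until none remain; q represents the cycle [p]. *)
Inductive reduces d : seq (edge d) -> seq (edge d) -> Prop :=
| red_done (p : seq (edge d)) : no_backtrack p -> reduces p p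
| red_step (p q r : seq (edge d)) : bt_step p q -> reduces q r -> reduces p r.

(* Splitting of the loop l (at two distinct locations) into (l1, l2).
   "Write l = a e b e c" is an equality of cycles, i.e. some rotation of the
   representative l equals the path a e b e c; the two displayed occurrences
   are then at distinct locations of l, and every pair of distinct locations
   arises this way. *)
Definition split_loop d (l l1 l2 : seq (edge d)) : Prop :=
  (exists r (a b c : seq (edge d)) (e : edge d),
      rot r l = a ++ e :: b ++ e :: c /\
      reduces (a ++ e :: c) l1 /\ reduces (rcons b e) l2)
  \/
  (exists r (a b c : seq (edge d)) (e : edge d),
      rot r l = a ++ e :: b ++ erev e :: c /\
      reduces (a ++ c) l1 /\ reduces b l2).

(* Loop sequences: seq of loops, modulo insertion/deletion of null loops. *)
Definition minrep d (s : seq (seq (edge d))) : seq (seq (edge d)) :=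
  [seq l <- s | l != [::]].

Definition lseq_eq d (s t : seq (seq (edge d))) : Prop :=
  size (minrep s) = size (minrep t) /\
  forall i, i < size (minrep s) ->
    cycle_eq (nth [::] (minrep s) i) (nth [::] (minrep t) i).

Definition lseq_length d (s : seq (seq (edge d))) : nat := sumn (map size (minrep s)).
Definition lseq_size d (s : seq (seq (edge d))) : nat := size (minrep s).
Definition lseq_index d (s : seq (seq (edge d))) : int :=
  ((lseq_length s)%:Z - (lseq_size s)%:Z)%R.

Definition splitting d (s s' : seq (seq (edge d))) : Prop :=
  exists k (l1 l2 : seq (edge d)),
    k < size (minrep s) /\
    split_loop (nth [::] (minrep s) k) l1 l2 /\
    lseq_eq s' (take k (minrep s) ++ l1 :: l2 :: drop k.+1 (minrep s)).

(** Since [ι(s)] is the sum of [|l| - 1] over the non-null loops [l] of [s],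
    a splitting changes it only through the split loop, and
    [ι(l1) + ι(l2) < ι(l)]: before erasing backtracks (which only shortens),
    the two pieces use the edges of [l] minus one occurrence of [e], or minus
    both [e] and [e^{-1}]. *)
From mathcomp Require Import all_boot all_order all_algebra.
From mathcomp Require Import zify.
Import Order.TTheory GRing.Theory Num.Theory.

Set Implicit Arguments.
Unset Strict Implicit.
Unset Printing Implicit Defensive.

Lemma bt_step_size d (p q : seq (edge d)) : bt_step p q -> size q < size p.
Proof. by case=> [p1 p2 e|p1 e]; rewrite ?size_cat /= ?size_rcons; lia. Qed.

Lemma reduces_size d (p q : seq (edge d)) : reduces p q -> size q <= size p.
Proof.
elim=> // {}p {}q r /bt_step_size lt_qp _ le_rq.
by rewrite (leq_trans le_rq) // ltnW.
Qed.

Lemma split_loop_index d (l l1 l2 : seq (edge d)) :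
  split_loop l l1 l2 -> (size l1).-1 + (size l2).-1 < (size l).-1.
Proof.
case=> -[r [a [b [c [e [def_l [/reduces_size le_l1 /reduces_size le_l2]]]]]]];
  move/(congr1 size): def_l; rewrite size_rot !size_cat /= ?size_cat /=;
  move: le_l1 le_l2; rewrite ?size_cat ?size_rcons /=; lia.
Qed.

Lemma lseq_length_sum d (s : seq (seq (edge d))) :
  lseq_length s = \sum_(l <- s) (size l).-1 + lseq_size s.
Proof.
rewrite /lseq_length /lseq_size /minrep.
elim: s => [|l s IH]; first by rewrite big_nil.
by rewrite big_cons; case: l => [|e l] //=; rewrite IH addnS addnA.
Qed.

Lemma lseq_index_sum d (s : seq (seq (edge d))) :
  lseq_index s = Posz (\sum_(l <- s) (size l).-1).
Proof. by rewrite /lseq_index lseq_length_sum PoszD addrK. Qed.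

Lemma lseq_index_minrep d (s : seq (seq (edge d))) :
  lseq_index (minrep s) = lseq_index s.
Proof. by rewrite /lseq_index /lseq_length /lseq_size /minrep filter_id. Qed.

Lemma lseq_eq_index d (s t : seq (seq (edge d))) :
  lseq_eq s t -> lseq_index s = lseq_index t.
Proof.
move=> [eq_size eq_nth]; rewrite /lseq_index /lseq_size eq_size /lseq_length.
congr (Posz _ - _)%R; congr sumn.
apply: (@eq_from_nth _ 0); first by rewrite !size_map.
move=> i; rewrite size_map => lt_i.
rewrite (nth_map [::]) // (nth_map [::]) -?eq_size //.
by case: (eq_nth i lt_i) => r ->; rewrite size_rot.
Qed.

Theorem lemma9p8 (d : nat) (s s' : seq (seq (edge d))) :
  all (@is_loop d) s ->
  minrep s != [::] ->
  splitting s s' ->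
  (lseq_index s' < lseq_index s)%R.
Proof.
move=> _ _ [k [l1 [l2 [lt_k [split_l eq_s']]]]].
rewrite (lseq_eq_index eq_s') -(lseq_index_minrep s) !lseq_index_sum ltz_nat.
rewrite -[in X in _ < X](cat_take_drop k (minrep s)) (drop_nth [::] lt_k).
rewrite !big_cat !big_cons /= ltn_add2l addnA ltn_add2r.
exact: split_loop_index.
Qed.
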